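(* Let $l\ge2$ be an integer and $r_1,\dots,r_{2l}\ge0$. Then $$(r_1+r_2)\Big(\prod_{j=2}^{l-1}(r_j+r_{j+1})\Big)(r_l+r_{l+1})\cdot(r_1+r_{l+2})\Big(\prod_{j=l+2}^{2l-1}(r_j+r_{j+1})\Big)(r_{2l}+r_{l+1})\ \ge\ \Big(\max_{1\le i\le 2l}r_i\Big)^2\Big(\prod_{j=1}^{2l}r_j\Big)'',$$ where $\big(\prod_{j=1}^{2l}r_j\big)''$ denotes the product of the $r_j$ with one maximal and one minimal factor removed; i.e. if $r_{i_1}\ge r_{i_2}\ge\dots\ge r_{i_{2l}}$ is a non-increasing rearrangement, the right-hand side is $r_{i_1}^2\prod_{j=2}^{2l-1}r_{i_j}$.
   Context: Empty products equal $1$. *)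

From HB Require Import structures.
From mathcomp Require Import all_boot all_order all_algebra.
Set Implicit Arguments. Unset Strict Implicit. Unset Printing Implicit Defensive.
Import Order.TTheory GRing.Theory Num.Theory.
Local Open Scope ring_scope.

Definition rseq (R : realDomainType) (r : nat -> R) (n : nat) : seq R :=
  [seq r i | i <- iota 1 n].

Definition rmax (R : realDomainType) (r : nat -> R) (n : nat) : R :=
  \big[Num.max/r 1%N]_(1 <= i < n.+1) r i.

Definition prod_pp (R : realDomainType) (r : nat -> R) (n : nat) : R :=
  let t := sort (fun x y : R => y <= x) (rseq r n) in
  \prod_(1 <= j < n.-1) t`_j.

(** The left-hand side is the product of [r_u + r_v] over the edges of the
    Hamiltonian cycle [1, 2, ..., l + 1, 2l, 2l - 1, ..., l + 2] on the
    indices.  Rotate the cycle so that it starts at an index [a] of a maximal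
    [r_a].  The two edges at [a] each contribute at least [r_a]; along the
    remaining path every vertex but one can be charged to a distinct edge
    (bounding [r_u + r_v] below by [r_u] or [r_v]), and the vertex left out
    may be chosen to be one of minimal weight. *)

From HB Require Import structures.
From mathcomp Require Import all_boot all_order all_algebra.
From mathcomp Require Import zify.

Set Implicit Arguments.
Unset Strict Implicit.
Unset Printing Implicit Defensive.
Import Order.TTheory GRing.Theory Num.Theory.
Local Open Scope ring_scope.

Lemma perm_rem (T : eqType) (x : T) (s1 s2 : seq T) :
  perm_eq s1 s2 -> perm_eq (rem x s1) (rem x s2).
Proof.
move=> eq_s12; have [xs1|xNs1] := boolP (x \in s1); last first.
  by rewrite !rem_id // -(perm_mem eq_s12).
have xs2 : x \in s2 by rewrite -(perm_mem eq_s12).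
rewrite -(perm_cons x); apply: perm_trans (perm_to_rem xs2).
by apply: perm_trans eq_s12; rewrite perm_sym perm_to_rem.
Qed.

Lemma last_iota m n : last m (iota m.+1 n) = (m + n)%N.
Proof. by elim: n m => [|n IH] m /=; rewrite ?addn0 // IH addSnnS. Qed.

Lemma iota_rcons m n : iota m n.+1 = rcons (iota m n) (m + n).
Proof. by rewrite -addn1 iotaD cats1. Qed.

Section PathProd.
Variable R : numDomainType.

Fixpoint path_prod (x : R) (s : seq R) : R :=
  if s is y :: s' then (x + y) * path_prod y s' else 1.

Lemma path_prod_cat x s1 s2 :
  path_prod x (s1 ++ s2) = path_prod x s1 * path_prod (last x s1) s2.
Proof. by elim: s1 x => [|y s1 IH] x /=; rewrite ?mul1r // IH mulrA. Qed.

Lemma path_prod_rcons x s y :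
  path_prod x (rcons s y) = path_prod x s * (last x s + y).
Proof. by rewrite -cats1 path_prod_cat /= mulr1. Qed.

Lemma path_prod_rev x s y :
  path_prod x (rcons s y) = path_prod y (rcons (rev s) x).
Proof.
elim: s x => [|z s IH] x /=; first by rewrite addrC.
rewrite IH rev_cons -(cats1 (rcons _ z)) path_prod_cat last_rcons /=.
by rewrite mulr1 addrC mulrC.
Qed.

Lemma path_prod_cycle_rot x s a : a \in x :: s ->
  exists2 p, perm_eq (x :: s) (a :: p) &
    path_prod x (rcons s x) = path_prod a (rcons p a).
Proof.
rewrite inE => /predU1P[->|]; first by exists s.
case/splitPr=> s1 s2; exists (s2 ++ x :: s1).
  by rewrite -cat_cons perm_catC.
by rewrite !rcons_cat !rcons_cons -!cat_rcons !path_prod_cat !last_rcons mulrC.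
Qed.

Lemma prod_seq_ge0 (s : seq R) :
  {in s, forall y, 0 <= y} -> 0 <= \prod_(y <- s) y.
Proof. by move=> s_ge0; rewrite big_seq; apply: prodr_ge0. Qed.

Lemma prod_rem_le_path_prod x s b :
  {in x :: s, forall y, 0 <= y} -> b \in x :: s ->
  \prod_(y <- rem b (x :: s)) y <= path_prod x s.
Proof.
elim: s x b => [|w s IH] x b xs_ge0 bxs.
  by move: bxs; rewrite mem_seq1 => /eqP->; rewrite /= eqxx big_nil.
have x_ge0 : 0 <= x by apply: xs_ge0; rewrite mem_head.
have w_ge0 : 0 <= w by apply: xs_ge0; rewrite !inE eqxx orbT.
have ws_ge0 : {in w :: s, forall y, 0 <= y}.
  by move=> y ys; apply: xs_ge0; rewrite inE ys orbT.
have [->|bNx] := eqVneq b x.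
  rewrite /= eqxx big_cons; apply: ler_pM => //; rewrite ?lerDr //.
    by apply: prod_seq_ge0 => y ys; apply: ws_ge0; rewrite inE ys orbT.
  by have := IH w w ws_ge0 (mem_head _ _); rewrite /= eqxx.
have bws : b \in w :: s by move: bxs; rewrite inE (negPf bNx).
have -> : rem b [:: x, w & s] = x :: rem b (w :: s).
  by rewrite /= eq_sym (negPf bNx).
rewrite big_cons; apply: ler_pM; rewrite ?lerDl //.
  by apply: prod_seq_ge0 => y /mem_rem; apply: ws_ge0.
exact: IH.
Qed.

Lemma prod_rem2_le_path_prod_cycle x s a b :
  {in x :: s, forall y, 0 <= y} -> a \in x :: s -> b \in rem a (x :: s) ->
  a ^+ 2 * \prod_(y <- rem b (rem a (x :: s))) y <= path_prod x (rcons s x).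
Proof.
move=> xs_ge0 axs; have [p eq_xs ->] := path_prod_cycle_rot axs.
have eq_rem : perm_eq (rem a (x :: s)) p.
  by have := perm_rem a eq_xs; rewrite /= eqxx.
rewrite (perm_mem eq_rem) (perm_big _ (perm_rem b eq_rem)).
have ap_ge0 : {in a :: p, forall y, 0 <= y}.
  by move=> y; rewrite -(perm_mem eq_xs); apply: xs_ge0.
case: p {eq_xs eq_rem} ap_ge0 => [|y p] // ap_ge0 byp.
have a_ge0 : 0 <= a by apply: ap_ge0; rewrite mem_head.
have yp_ge0 : {in y :: p, forall z, 0 <= z}.
  by move=> z zp; apply: ap_ge0; rewrite inE zp orbT.
have y_ge0 : 0 <= y by apply: yp_ge0; rewrite mem_head.
have last_ge0 : 0 <= last y p by apply: yp_ge0; rewrite mem_last.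
rewrite rcons_cons [path_prod a _]/= path_prod_rcons expr2.
rewrite [X in _ <= X]mulrCA [X in _ <= X]mulrC.
apply: ler_pM; rewrite ?mulr_ge0 //.
- by apply: prod_seq_ge0 => z /mem_rem; apply: yp_ge0.
- by apply: ler_pM; rewrite ?lerDl ?lerDr.
- exact: prod_rem_le_path_prod.
Qed.

Lemma path_prod_cycle_split x s1 y s2 :
  path_prod x (rcons (s1 ++ y :: rev s2) x)
    = path_prod x (rcons s1 y) * path_prod x (rcons s2 y).
Proof.
rewrite rcons_cat -cat_rcons path_prod_cat last_rcons.
by rewrite [path_prod y _]path_prod_rev revK.
Qed.

Lemma path_prod_iota (r : nat -> R) m k :
  path_prod (r m) (map r (iota m.+1 k)) = \prod_(m <= j < m + k) (r j + r j.+1).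
Proof.
elim: k m => [|k IH] m /=; first by rewrite addn0 big_geq.
by rewrite IH [RHS]big_ltn ?addSnnS // -addSnnS leq_addr.
Qed.

Lemma path_prod_theta_cycle (r : nat -> R) k :
  (r 1%N + r 2%N) * (\prod_(2 <= j < k.+2) (r j + r j.+1)) * (r k.+2 + r k.+3)
    * (r 1%N + r k.+4) * (\prod_(k.+4 <= j < k.+4 + k) (r j + r j.+1))
    * (r (k.+4 + k)%N + r k.+3)
  = path_prod (r 1%N)
      (rcons (map r (iota 2 k.+1) ++ r k.+3 :: rev (map r (iota k.+4 k.+1)))
        (r 1%N)).
Proof.
rewrite path_prod_cycle_split !path_prod_rcons path_prod_iota last_map last_iota.
rewrite [iota k.+4 _]/= [map _ _]/= [path_prod (r 1%N) _]/= [last _ _]/=.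
by rewrite path_prod_iota last_map last_iota add1n [in RHS]big_ltn // !mulrA.
Qed.

End PathProd.

Section Sorted.
Variable R : realDomainType.

Lemma sort_ge_inner_prod (s : seq R) : (2 <= size s)%N ->
  exists a b, [/\ a \in s, b \in rem a s, {in s, forall z, z <= a} &
    \prod_(1 <= j < (size s).-1) (sort (fun x y : R => y <= x) s)`_j
      = \prod_(z <- rem b (rem a s)) z].
Proof.
move=> size_s; set t := sort _ s.
have eq_ts : perm_eq t s by rewrite perm_sort.
have t_sorted : sorted (fun x y : R => y <= x) t.
  by apply: sort_sorted => x y; apply: le_total.
rewrite -(perm_size eq_ts) in size_s *.
case: t eq_ts t_sorted size_s => [|a t] //; case/lastP: t => [|w b] // eq_s.
move=> w_sorted _; exists a, b.
have eq_rem : perm_eq (rem a s) (b :: w).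
  by rewrite perm_sym; have := perm_rem a eq_s; rewrite /= eqxx perm_rcons.
split.
- by rewrite -(perm_mem eq_s) mem_head.
- by rewrite (perm_mem eq_rem) mem_head.
- move=> z; rewrite -(perm_mem eq_s) inE => /predU1P[-> //|zw].
  have ge_trans : transitive (fun x y : R => y <= x).
    by move=> y x z' xy yz; apply: le_trans yz xy.
  exact: allP (order_path_min ge_trans w_sorted) z zw.
rewrite (perm_big _ (perm_rem b eq_rem)) /= eqxx big_add1 [RHS](big_nth 0).
rewrite size_rcons /=; apply: eq_big_nat => j /andP[_ jw].
by rewrite nth_rcons jw.
Qed.

Lemma rmax_mem (r : nat -> R) n : (0 < n)%N -> rmax r n \in rseq r n.
Proof.
move=> n_gt0; rewrite /rmax big_nat.
apply: (big_ind (fun z => z \in rseq r n)).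
- by rewrite map_f // mem_iota leqnn add1n.
- by move=> x y xr yr; rewrite maxEle; case: ifP.
- by move=> i /andP[i_ge1 i_le]; rewrite map_f // mem_iota i_ge1 add1n.
Qed.

Lemma prod_pp_rem (r : nat -> R) n c : (2 <= n)%N -> perm_eq c (rseq r n) ->
  exists a b, [/\ a \in c, b \in rem a c, rmax r n <= a &
    prod_pp r n = \prod_(z <- rem b (rem a c)) z].
Proof.
move=> n_ge2 eq_c.
have size_r : size (rseq r n) = n by rewrite size_map size_iota.
have [|a [b [a_r b_r a_max prod_eq]]] := @sort_ge_inner_prod (rseq r n).
  by rewrite size_r.
exists a, b; split.
- by rewrite (perm_mem eq_c).
- by rewrite (perm_mem (perm_rem a eq_c)).
- by apply: a_max; rewrite rmax_mem // ltnW.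
rewrite /prod_pp /= -[in n.-1]size_r prod_eq.
by apply: perm_big; rewrite !perm_rem // perm_sym.
Qed.

End Sorted.

Theorem lemma3p5 (R : realDomainType) (l : nat) (r : nat -> R) :
  (2 <= l)%N ->
  (forall i, (1 <= i <= 2 * l)%N -> 0 <= r i) ->
  (r 1%N + r 2%N) * (\prod_(2 <= j < l) (r j + r j.+1)) * (r l + r l.+1)
    * (r 1%N + r (l + 2)%N) * (\prod_(l + 2 <= j < 2 * l) (r j + r j.+1))
    * (r (2 * l)%N + r l.+1)
  >= rmax r (2 * l) ^+ 2 * prod_pp r (2 * l).
Proof.
case: l => [|[|k]] // _ r_ge0.
rewrite addn2 (_ : (2 * k.+2 = k.+4 + k)%N); last by lia.
rewrite path_prod_theta_cycle.
set c := _ ++ _ :: _.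
have eq_c : perm_eq (r 1%N :: c) (rseq r (k.+4 + k)).
  have -> : r 1%N :: c
      = map r (1%N :: iota 2 k.+1 ++ k.+3 :: rev (iota k.+4 k.+1)).
    by rewrite /= map_cat /= map_rev.
  apply: perm_map; rewrite addSnnS iotaD -cat_rcons -cat_cons -iota_rcons.
  by rewrite perm_cat2l perm_rev.
have c_ge0 : {in r 1%N :: c, forall z, 0 <= z}.
  move=> z; rewrite (perm_mem eq_c) => /mapP[i]; rewrite mem_iota => i_range ->.
  by apply: r_ge0; lia.
have [a [b [a_c b_c rmax_le ->]]] := prod_pp_rem (isT : (2 <= k.+4 + k)%N) eq_c.
apply: le_trans (prod_rem2_le_path_prod_cycle c_ge0 a_c b_c).
apply: ler_wpM2r.
  by apply: prod_seq_ge0 => z /mem_rem /mem_rem; apply: c_ge0.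
have rmax_ge0 : 0 <= rmax r (k.+4 + k).
  by apply: c_ge0; rewrite (perm_mem eq_c) rmax_mem.
by rewrite !expr2 ler_pM.
Qed.
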